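(* Let $X$ be a random variable taking values in a set $\mathcal{X}$, $Y \in [0,1]$ a target outcome and $\hat{Y} \in [0,1]$ an expert prediction, all jointly distributed. Let $\mathcal{F}^{\text{binary}}$ be a class of functions $\mathcal{X} \to \{0,1\}$, let $\alpha \ge 0$, and let $S_1, \dots, S_K$ be an $\alpha$-multicalibrated partition with respect to $\mathcal{F}^{\text{binary}}$ and $Y$. Suppose that for every $k \in [K]$ there exists $\tilde{f}_k \in \mathcal{F}^{\text{binary}}$ such that $Y$ and $\hat{Y}$ are conditionally independent given $\tilde{f}_k(X)$ and the event $X \in S_k$. Then for all $k \in [K]$, $$\left|\mathrm{Cov}_k(Y, \hat{Y})\right| \le \sqrt{\frac{\alpha}{2}}.$$
   Context: $\mathrm{Cov}_k$ denotes covariance conditional on $\{X \in S_k\}$ (assumed to have positive probability). A set $S \subseteq \mathcal{X}$ is $\alpha$-indistinguishable with respect to a function class $\mathcal{F}$ and target $Y$ if $|\mathrm{Cov}(f(X), Y \mid X \in S)| \le \alpha$ for all $f \in \mathcal{F}$. Sets $S_1, \dots, S_K$ form an $\alpha$-multicalibrated partition with respect to $\mathcal{F}$ and $Y$ if they partition $\mathcal{X}$ and each $S_k$ is $\alpha$-indistinguishable with respect to $\mathcal{F}$ and $Y$. *)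

From HB Require Import structures.
From mathcomp Require Import all_boot all_order all_algebra.
From mathcomp Require Import all_classical all_reals all_analysis.
Set Implicit Arguments. Unset Strict Implicit. Unset Printing Implicit Defensive.
Import Order.TTheory GRing.Theory Num.Theory.
Local Open Scope classical_set_scope.
Local Open Scope ring_scope.

Definition cond_expect {d} {Omega : measurableType d} {R : realType}
  (P : probability Omega R) (E : set Omega) (Z : Omega -> R) : R :=
  Rintegral P E Z / fine (P E).

Definition cond_cov {d} {Omega : measurableType d} {R : realType}
  (P : probability Omega R) (E : set Omega) (A B : Omega -> R) : R :=
  cond_expect P E (fun w => A w * B w)
  - cond_expect P E A * cond_expect P E B.

Definition indistinguishable {d} {Omega : measurableType d} {R : realType}
  {T : Type} (P : probability Omega R) (X : Omega -> T) (Y : Omega -> R)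
  (F : set (T -> bool)) (alpha : R) (S : set T) : Prop :=
  forall f, F f ->
    `| cond_cov P (X @^-1` S) (fun w => (f (X w))%:R) Y | <= alpha.

Definition multicalibrated_partition {d} {Omega : measurableType d}
  {R : realType} {T : Type} (P : probability Omega R) (X : Omega -> T)
  (Y : Omega -> R) (F : set (T -> bool)) (alpha : R) (K : nat)
  (S : 'I_K -> set T) : Prop :=
  (forall x : T, exists k, S k x) /\
  (forall k l : 'I_K, k != l -> S k `&` S l = set0) /\
  (forall k, indistinguishable P X Y F alpha (S k)).

(* Y and Yh are conditionally independent given the (binary) random
   variable f(X) and the event {X in S}: for each value b of f(X), on the
   event E_b = {X in S, f(X) = b} the joint law factorizes,
   P(E_b, Y in A, Yh in B) P(E_b) = P(E_b, Y in A) P(E_b, Yh in B)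
   for all Borel A, B (the multiplicative form of
   P(Y in A, Yh in B | E_b) = P(Y in A | E_b) P(Yh in B | E_b)). *)
Definition cond_indep_given {d} {Omega : measurableType d} {R : realType}
  {T : Type} (P : probability Omega R) (X : Omega -> T) (Y Yh : Omega -> R)
  (f : T -> bool) (S : set T) : Prop :=
  forall (b : bool) (A B : set R), measurable A -> measurable B ->
    let E := X @^-1` S `&` [set w | f (X w) = b] in
    (P (E `&` Y @^-1` A `&` Yh @^-1` B) * P E
     = P (E `&` Y @^-1` A) * P (E `&` Yh @^-1` B))%E.

From HB Require Import structures.
From mathcomp Require Import all_boot all_order all_algebra.
From mathcomp Require Import all_classical all_reals all_analysis.
From mathcomp Require Import ring lra.
Set Implicit Arguments. Unset Strict Implicit. Unset Printing Implicit Defensive.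
Import Order.TTheory GRing.Theory Num.Theory.
Local Open Scope classical_set_scope.
Local Open Scope ring_scope.

(* Split the cell E = {X in S_k} along the feature f in F given by the
   hypothesis into E1 = E /\ {f(X) = 1} and E0 = E /\ {f(X) = 0}.  On each
   piece Y and Yh are conditionally independent, hence uncorrelated: for
   bounded variables this follows from the product rule on events by
   approximating Y and Yh with finite-valued staircase functions.  The law of
   total covariance then gives
     p0 p1 Cov_k(Y, Yh) = Cov_k(f(X), Y) (p0 h1 - p1 h0),
     Cov_k(f(X), Y) = p0 y1 - p1 y0,
   where p_i = P(E_i | E) and y_i, h_i are the conditional means of Y 1_{E_i},
   Yh 1_{E_i} given E.  Both factors p0 h1 - p1 h0 and p0 y1 - p1 y0 are
   bounded by p0 p1 <= 1/4, so |Cov_k(Y, Yh)| <= |Cov_k(f(X), Y)| <= min(alpha, 1/4)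
   and Cov_k(Y, Yh)^2 <= alpha / 4. *)

Section Staircase.
Context {R : realType}.

Definition cell (n i : nat) : set R := `[i%:R / n%:R, i.+1%:R / n%:R[.

Lemma measurable_cell n i : measurable (cell n i).
Proof. exact: measurable_itv. Qed.

(* For t in [0, 1], staircase n t = floor(n t) / n; writing it as a combination
   of cell indicators lets uncorrelated_on_sum apply to staircase n \o Z. *)
Definition staircase (n : nat) (t : R) : R :=
  \sum_(i < n.+1) i%:R / n%:R * \1_(cell n i) t.

Lemma staircase_approx n (t : R) : (0 < n)%N -> 0 <= t <= 1 ->
  0 <= t - staircase n t <= n%:R^-1.
Proof.
move=> n0 /andP[t0 t1]; have n0' : 0 < n%:R :> R by rewrite ltr0n.
set k := Num.truncn (t * n%:R).
have /andP[kt tk] : k%:R <= t * n%:R < k.+1%:R.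
  exact/truncn_itv/mulr_ge0/ltW.
have kn : (k < n.+1)%N.
  rewrite ltnS /k truncn_le_nat (@le_lt_trans _ _ n%:R) ?ltr_nat //.
  by rewrite -[leRHS]mul1r ler_wpM2r // ltW.
have indic_cell i : \1_(cell n i) t = (i == k)%:R :> R.
  rewrite indicE /k; congr (_%:R).
  have -> : (t \in cell n i) = (i%:R / n%:R <= t < i.+1%:R / n%:R).
    by apply/idP/idP => [/set_mem|?]; last apply: mem_set; rewrite /cell /= in_itv.
  by rewrite eq_sym truncn_eq ?(mulr_ge0 t0 (ltW n0')) // ler_pdivrMr // ltr_pdivlMr.
have -> : staircase n t = k%:R / n%:R.
  rewrite /staircase (bigD1 (Ordinal kn)) //= indic_cell eqxx mulr1 big1 ?addr0 //.
  move=> i ik; rewrite indic_cell; suff /negPf -> : nat_of_ord i != k by rewrite mulr0.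
  by apply: contra ik => /eqP ik; apply/eqP/val_inj.
rewrite subr_ge0 ler_pdivrMr // kt /= lerBlDl.
have -> : k%:R / n%:R + n%:R^-1 = k.+1%:R / n%:R :> R by rewrite -natr1 mulrDl mul1r.
by rewrite ler_pdivlMr // ltW.
Qed.

End Staircase.

Lemma eq0_of_norm_le_divn {R : archiRealFieldType} (x c : R) :
  (forall n, (0 < n)%N -> `|x| <= c / n%:R) -> x = 0.
Proof.
move=> hx; apply/eqP/negPn/negP => x0; have x0' : 0 < `|x| by rewrite normr_gt0.
set n := (Num.truncn (c / `|x|)).+1; have n0 : 0 < n%:R :> R by rewrite ltr0n.
have := hx n isT; rewrite ler_pdivlMr // mulrC -ler_pdivlMr //.
by rewrite leNgt /n truncnS_gt.
Qed.

Lemma measurableT_preimage {d d'} {aT : measurableType d} {rT : measurableType d'}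
  (f : aT -> rT) (B : set rT) :
  measurable_fun setT f -> measurable B -> measurable (f @^-1` B).
Proof. by move=> mf mB; rewrite -[f @^-1` B]setTI; exact: mf. Qed.

Section BoundedMeasurable.
Context d (Omega : measurableType d) (R : realType).
Implicit Types (A D : set Omega) (f g : Omega -> R).

Definition bounded_measurable g :=
  measurable_fun setT g /\ exists M, forall w, `|g w| <= M.

Lemma bounded_measurable_cst (c : R) : bounded_measurable (fun=> c).
Proof. by split; [exact: measurable_cst | exists `|c|]. Qed.

Lemma bounded_measurable_indic A : measurable A -> bounded_measurable \1_A.
Proof.
move=> mA; split; first exact: measurable_realfun.measurable_indic.
by exists 1 => w; rewrite indicE; case: (w \in A); rewrite ?normr1 ?normr0.
Qed.

Lemma bounded_measurable_unit g : measurable_fun setT g ->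
  (forall w, 0 <= g w <= 1) -> bounded_measurable g.
Proof.
by move=> mg g01; split=> //; exists 1 => w; have /andP[g0 g1] := g01 w; rewrite ger0_norm.
Qed.

Lemma bounded_measurableD f g : bounded_measurable f -> bounded_measurable g ->
  bounded_measurable (fun w => f w + g w).
Proof.
move=> [mf [M hM]] [mg [N hN]]; split; first exact: measurable_realfun.measurable_funD.
by exists (M + N) => w; rewrite (le_trans (ler_normD _ _)) ?lerD.
Qed.

Lemma bounded_measurableB f g : bounded_measurable f -> bounded_measurable g ->
  bounded_measurable (fun w => f w - g w).
Proof.
move=> [mf [M hM]] [mg [N hN]]; split; first exact: measurable_realfun.measurable_funB.
by exists (M + N) => w; rewrite (le_trans (ler_normB _ _)) ?lerD.
Qed.

Lemma bounded_measurableM f g : bounded_measurable f -> bounded_measurable g ->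
  bounded_measurable (fun w => f w * g w).
Proof.
move=> [mf [M hM]] [mg [N hN]]; split; first exact: measurable_realfun.measurable_funM.
by exists (M * N) => w; rewrite normrM ler_pM.
Qed.

Lemma bounded_measurable_sum n (g : 'I_n -> Omega -> R) :
  (forall i, bounded_measurable (g i)) ->
  bounded_measurable (fun w => \sum_(i < n) g i w).
Proof.
elim: n g => [|n IH] g hg.
  by under [fun w => _]funext do rewrite big_ord0; exact: bounded_measurable_cst.
under [fun w => _]funext do rewrite big_ord_recr.
by apply: bounded_measurableD => //; apply: IH.
Qed.

Variable mu : {finite_measure set Omega -> \bar R}.

Lemma bounded_measurable_integrable D g : measurable D ->
  bounded_measurable g -> mu.-integrable D (EFin \o g).
Proof.
move=> mD [mg [M hM]]; apply: measurable_bounded_integrable => //.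
- by rewrite ltey_eq fin_num_measure.
- exact: measurable_funS mg.
- exists M; split; [exact: num_real | move=> y My x _ /=].
  exact: le_trans (hM x) (ltW My).
Qed.

Lemma Rintegral_sum D n (g : 'I_n -> Omega -> R) : measurable D ->
  (forall i, bounded_measurable (g i)) ->
  \int[mu]_(w in D) (\sum_(i < n) g i w) = \sum_(i < n) \int[mu]_(w in D) g i w.
Proof.
move=> mD; elim: n g => [|n IH] g hg.
  by under eq_Rintegral do rewrite big_ord0; rewrite Rintegral_cst // mul0r big_ord0.
under eq_Rintegral do rewrite big_ord_recr.
rewrite RintegralD ?bounded_measurable_integrable ?big_ord_recr ?IH //.
exact: bounded_measurable_sum.
Qed.

Lemma Rintegral_indic D A : measurable D -> measurable A ->
  \int[mu]_(w in D) \1_A w = fine (mu (A `&` D)).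
Proof. by move=> mD mA; rewrite /Rintegral integral_indic. Qed.

Lemma norm_Rintegral_le D g (c : R) : measurable D -> bounded_measurable g ->
  (forall w, `|g w| <= c) -> `|\int[mu]_(w in D) g w| <= c * fine (mu D).
Proof.
move=> mD bg gc; rewrite -Rintegral_cst //.
apply: le_trans (le_normr_Rintegral _ _) _ => //; first exact: bounded_measurable_integrable.
apply: le_Rintegral => //; apply: bounded_measurable_integrable => //.
  by case: bg => mg [M hM]; split; [exact: measurableT_comp | exists M => w; rewrite normr_id].
exact: bounded_measurable_cst.
Qed.

Lemma Rintegral_unit_bounds D g : measurable D -> bounded_measurable g ->
  (forall w, 0 <= g w <= 1) -> 0 <= \int[mu]_(w in D) g w <= fine (mu D).
Proof.
move=> mD bg g01; rewrite Rintegral_ge0 => [/=|w _]; last by case/andP: (g01 w).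
rewrite -[leRHS]mul1r -Rintegral_cst //; apply: le_Rintegral => //.
- exact: bounded_measurable_integrable.
- exact/bounded_measurable_integrable/bounded_measurable_cst.
- by move=> w _; case/andP: (g01 w).
Qed.

End BoundedMeasurable.

Section Uncorrelated.
Context d (Omega : measurableType d) (R : realType).
Variable mu : {finite_measure set Omega -> \bar R}.
Implicit Types (E : set Omega) (f g : Omega -> R).

(* mu(E)^2 Cov(f, g | E) = 0, in a form that needs no division by mu(E). *)
Definition uncorrelated_on E f g :=
  (\int[mu]_(w in E) (f w * g w)) * fine (mu E)
  = (\int[mu]_(w in E) f w) * (\int[mu]_(w in E) g w).

Lemma uncorrelated_onC E f g : uncorrelated_on E f g -> uncorrelated_on E g f.
Proof.
rewrite /uncorrelated_on [in RHS]mulrC => <-.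
by congr (_ * _); apply: eq_Rintegral => w _; rewrite mulrC.
Qed.

Lemma uncorrelated_on_sum E g n (c : 'I_n -> R) (h : 'I_n -> Omega -> R) :
  measurable E -> bounded_measurable g -> (forall i, bounded_measurable (h i)) ->
  (forall i, uncorrelated_on E g (h i)) ->
  uncorrelated_on E g (fun w => \sum_(i < n) c i * h i w).
Proof.
move=> mE bg bh gh; rewrite /uncorrelated_on.
have bch i : bounded_measurable (fun w => c i * h i w).
  exact/bounded_measurableM/bh/bounded_measurable_cst.
under eq_Rintegral do rewrite big_distrr.
rewrite !Rintegral_sum //; last by move=> i; apply: bounded_measurableM.
rewrite big_distrl big_distrr; apply: eq_bigr => i _ /=.
under eq_Rintegral do rewrite mulrCA.
rewrite !RintegralZl ?bounded_measurable_integrable //; last exact: bounded_measurableM.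
by rewrite -mulrA gh mulrCA.
Qed.

Lemma bounded_measurable_staircase n (Z : Omega -> R) : measurable_fun setT Z ->
  bounded_measurable (fun w => staircase n (Z w)).
Proof.
move=> mZ; apply: bounded_measurable_sum => i.
apply: bounded_measurableM; first exact: bounded_measurable_cst.
exact: bounded_measurable_indic (measurableT_preimage mZ (measurable_cell n i)).
Qed.

Lemma norm_Rintegral_sub_staircase E g (Z : Omega -> R) (M : R) n :
  measurable E -> bounded_measurable g -> (forall w, `|g w| <= M) ->
  measurable_fun setT Z -> (forall w, 0 <= Z w <= 1) -> (0 < n)%N ->
  `|\int[mu]_(w in E) (g w * Z w) - \int[mu]_(w in E) (g w * staircase n (Z w))|
  <= M / n%:R * fine (mu E).
Proof.
move=> mE bg gM mZ Z01 n0.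
have bgZ := bounded_measurableM bg (bounded_measurable_unit mZ Z01).
have bgq := bounded_measurableM bg (bounded_measurable_staircase n mZ).
rewrite -RintegralB ?bounded_measurable_integrable //.
apply: norm_Rintegral_le => // [|w]; first exact: bounded_measurableB.
have /andP[q0 qn] := staircase_approx n0 (Z01 w).
by rewrite -mulrBr normrM ler_pM // ger0_norm.
Qed.

Lemma uncorrelated_on_of_indic E g (Z : Omega -> R) :
  measurable E -> bounded_measurable g ->
  measurable_fun setT Z -> (forall w, 0 <= Z w <= 1) ->
  (forall B, measurable B -> uncorrelated_on E g \1_(Z @^-1` B)) ->
  uncorrelated_on E g Z.
Proof.
move=> mE bg mZ Z01 gB; have [_ [M gM]] := bg.
have gq n : uncorrelated_on E g (fun w => staircase n (Z w)).
  apply: (uncorrelated_on_sum (fun i => i%:R / n%:R) (h := fun i => \1_(Z @^-1` cell n i))) => // i.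
    exact: bounded_measurable_indic (measurableT_preimage mZ (measurable_cell n i)).
  exact: gB (measurable_cell n i).
have int1 f : \int[mu]_(w in E) (1 * f w) = \int[mu]_(w in E) f w.
  by apply: eq_Rintegral => w _; rewrite mul1r.
have m0 : 0 <= fine (mu E) := fine_ge0 (measure_ge0 _ _).
(* Exact for the staircase approximations of Z, and both sides move by O(1/n)
   when Z is replaced by staircase n \o Z. *)
rewrite /uncorrelated_on; apply/eqP; rewrite -subr_eq0; apply/eqP.
apply: (eq0_of_norm_le_divn (c := 2 * M * fine (mu E) ^+ 2)) => n n0.
have ha := norm_Rintegral_sub_staircase mE bg gM mZ Z01 n0.
have hb := norm_Rintegral_le mu mE bg gM.
have norm1 (w : Omega) : `|1| <= 1 :> R by rewrite normr1.
have := norm_Rintegral_sub_staircase mE (bounded_measurable_cst Omega 1) norm1 mZ Z01 n0.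
rewrite !int1 => hc.
move: (gq n) ha hb hc; rewrite /uncorrelated_on.
set a := \int[mu]_(w in E) (g w * Z w); set an := \int[mu]_(w in E) (g w * _).
set b := \int[mu]_(w in E) g w; set c := \int[mu]_(w in E) Z w.
set cn := \int[mu]_(w in E) staircase n (Z w); set m := fine (mu E).
move=> gqn ha hb hc.
have -> : a * m - b * c = (a - an) * m - b * (c - cn) by rewrite mulrBl mulrBr gqn; ring.
rewrite (le_trans (ler_normB _ _)) // !normrM (ger0_norm m0).
have -> : 2 * M * m ^+ 2 / n%:R = M / n%:R * m * m + M * m * (1 / n%:R * m) by ring.
by rewrite lerD // ?ler_wpM2r // ler_pM.
Qed.

Lemma uncorrelated_on_of_indep E (Y Yh : Omega -> R) :
  measurable E -> measurable_fun setT Y -> measurable_fun setT Yh ->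
  (forall w, 0 <= Y w <= 1) -> (forall w, 0 <= Yh w <= 1) ->
  (forall A B, measurable A -> measurable B ->
    (mu (E `&` Y @^-1` A `&` Yh @^-1` B) * mu E
     = mu (E `&` Y @^-1` A) * mu (E `&` Yh @^-1` B))%E) ->
  uncorrelated_on E Y Yh.
Proof.
move=> mE mY mYh Y01 Yh01 indep.
have mYA A : measurable A -> measurable (Y @^-1` A) := measurableT_preimage mY.
have mYhB B : measurable B -> measurable (Yh @^-1` B) := measurableT_preimage mYh.
have indic_indic A B : measurable A -> measurable B ->
    uncorrelated_on E \1_(Y @^-1` A) \1_(Yh @^-1` B).
  move=> mA mB; have mYA' := mYA _ mA; have mYhB' := mYhB _ mB.
  have mYAB := measurableI _ _ mYA' mYhB'; rewrite /uncorrelated_on.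
  have -> : (fun w => \1_(Y @^-1` A) w * \1_(Yh @^-1` B) w)
           = \1_(Y @^-1` A `&` Yh @^-1` B) :> (Omega -> R) by rewrite indicI.
  rewrite !Rintegral_indic // !(setIC _ E) setIA.
  have := congr1 fine (indep A B mA mB).
  by rewrite !fineM ?fin_num_measure //; do ?apply: measurableI.
have Yh_indic A : measurable A -> uncorrelated_on E Yh \1_(Y @^-1` A).
  move=> mA; apply/uncorrelated_onC/uncorrelated_on_of_indic => //.
  - exact/bounded_measurable_indic/mYA.
  - by move=> B mB; exact: indic_indic.
apply/uncorrelated_onC/uncorrelated_on_of_indic => //.
exact: bounded_measurable_unit.
Qed.

End Uncorrelated.

Lemma norm_cross_diff_le {R : realDomainType} (p1 p0 a1 a0 : R) :
  0 <= a1 <= p1 -> 0 <= a0 <= p0 -> `|p0 * a1 - p1 * a0| <= p0 * p1.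
Proof. by move=> /andP[? ?] /andP[? ?]; rewrite ler_norml; apply/andP; split; nra. Qed.

(* p_i, y_i, h_i, z_i: the conditional masses of the two cells and of Y, Yh and
   Y Yh on them; the hypotheses z_i p_i = y_i h_i express uncorrelatedness
   on each cell. *)
Lemma binary_mixture_cov_bound {R : realFieldType} (p1 p0 y1 y0 h1 h0 z1 z0 : R) :
  p1 + p0 = 1 ->
  0 <= y1 <= p1 -> 0 <= y0 <= p0 -> 0 <= h1 <= p1 -> 0 <= h0 <= p0 ->
  0 <= z1 <= p1 -> 0 <= z0 <= p0 ->
  z1 * p1 = y1 * h1 -> z0 * p0 = y0 * h0 ->
  `|z1 + z0 - (y1 + y0) * (h1 + h0)| <= `|y1 - p1 * (y1 + y0)| <= 4^-1.
Proof.
move=> p10 y1_01 y0_01 h1_01 h0_01 /andP[z1_ge0 z1_le] /andP[z0_ge0 z0_le] z1E z0E.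
have p0E : p0 = 1 - p1 by lra.
have [p1_ge0 p0_ge0] : 0 <= p1 /\ 0 <= p0.
  by case/andP: y1_01 => ? ?; case/andP: y0_01 => ? ?; split; lra.
have -> : y1 - p1 * (y1 + y0) = p0 * y1 - p1 * y0 by rewrite p0E; ring.
have cf_le := norm_cross_diff_le y1_01 y0_01.
have pp_le : p0 * p1 <= 4^-1 by rewrite p0E; have := sqr_ge0 (1 - 2 * p1); lra.
rewrite (le_trans cf_le pp_le) andbT; set c := z1 + z0 - _.
have [pp_gt0 | pp_le0] := ltrP 0 (p0 * p1); last first.
  suff -> : c = 0 by rewrite normr0.
  have /orP[/eqP p0_0 | /eqP p1_0] : (p0 == 0) || (p1 == 0).
    by rewrite -mulf_eq0 eq_le pp_le0 mulr_ge0.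
  - move: y0_01 h0_01; rewrite /c p0_0 => /andP[? ?] /andP[? ?].
    have [-> -> ->] : [/\ y0 = 0, h0 = 0 & z0 = 0] by split; lra.
    by rewrite !addr0 -z1E (_ : p1 = 1) ?mulr1 ?subrr //; lra.
  - move: y1_01 h1_01; rewrite /c p1_0 => /andP[? ?] /andP[? ?].
    have [-> -> ->] : [/\ y1 = 0, h1 = 0 & z1 = 0] by split; lra.
    by rewrite !add0r -z0E (_ : p0 = 1) ?mulr1 ?subrr //; lra.
have key : p0 * p1 * c = (p0 * y1 - p1 * y0) * (p0 * h1 - p1 * h0).
  have -> : p0 * p1 * c = p0 * (z1 * p1) + p1 * (z0 * p0) - p0 * p1 * ((y1 + y0) * (h1 + h0)).
    by rewrite /c; ring.
  by rewrite z1E z0E p0E; ring.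
have h_le := norm_cross_diff_le h1_01 h0_01.
rewrite -(ler_pM2r pp_gt0) -(ger0_norm (ltW pp_gt0)) -normrM mulrC key normrM.
by rewrite (ger0_norm (ltW pp_gt0)) ler_wpM2l.
Qed.

Lemma le_sqrt_half_of_le_quarter {R : rcfType} (u a : R) :
  0 <= u -> u <= a -> u <= 4^-1 -> u <= Num.sqrt (a / 2).
Proof.
move=> u0 ua u4; rewrite -[leLHS](ger0_norm u0) -sqrtr_sqr; apply: ler_wsqrtr; nra.
Qed.

Section ConditionalCovariance.
Context d (Omega : measurableType d) (R : realType) (P : probability Omega R).

Lemma cond_cov_le_cond_cov_indic (E T : set Omega) (Y Yh : Omega -> R) :
  measurable E -> measurable T -> (0 < P E)%E ->
  measurable_fun setT Y -> measurable_fun setT Yh ->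
  (forall w, 0 <= Y w <= 1) -> (forall w, 0 <= Yh w <= 1) ->
  uncorrelated_on P (E `&` T) Y Yh -> uncorrelated_on P (E `&` ~` T) Y Yh ->
  `|cond_cov P E Y Yh| <= `|cond_cov P E \1_T Y| <= 4^-1.
Proof.
move=> mE mT PE_gt0 mY mYh Y01 Yh01 unc1 unc0.
have mE1 := measurableI _ _ mE mT; have mE0 := measurableI _ _ mE (measurableC mT).
have YYh01 w : 0 <= Y w * Yh w <= 1.
  by have /andP[? ?] := Y01 w; have /andP[? ?] := Yh01 w; rewrite mulr_ge0 ?mulr_ile1.
have bY := bounded_measurable_unit mY Y01; have bYh := bounded_measurable_unit mYh Yh01.
have bYYh := bounded_measurableM bY bYh; have bT := bounded_measurable_indic R mT.
have bTY := bounded_measurableM bT bY.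
have int_split g : bounded_measurable g -> \int[P]_(w in E) g w
    = \int[P]_(w in E `&` T) g w + \int[P]_(w in E `&` ~` T) g w.
  move=> bg; rewrite -Rintegral_setU //; first by rewrite -setIUr setUv setIT.
    by apply: bounded_measurable_integrable => //; exact: measurableU.
  by apply/disj_set2P; rewrite setIACA setICr setI0.
have m_gt0 : 0 < fine (P E) by rewrite fine_gt0 // PE_gt0 ltey_eq fin_num_measure.
have m_split : fine (P E) = fine (P (E `&` T)) + fine (P (E `&` ~` T)).
  by have := int_split _ (bounded_measurable_cst Omega 1); rewrite !Rintegral_cst // !mul1r.
have TY1 : \int[P]_(w in E `&` T) (\1_T w * Y w) = \int[P]_(w in E `&` T) Y w.
  by apply: eq_Rintegral => w /set_mem[_ Tw]; rewrite indicE mem_set // mul1r.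
have TY0 : \int[P]_(w in E `&` ~` T) (\1_T w * Y w) = 0.
  rewrite -[RHS](mul0r (fine (P (E `&` ~` T)))) -Rintegral_cst //.
  by apply: eq_Rintegral => w /set_mem[_ nTw]; rewrite indicE memNset // mul0r.
have T1 : \int[P]_(w in E `&` T) \1_T w = fine (P (E `&` T)).
  by rewrite Rintegral_indic // setICA setIid.
have T0 : \int[P]_(w in E `&` ~` T) \1_T w = 0.
  by rewrite Rintegral_indic // setICA setICr setI0 measure0.
rewrite /cond_cov /cond_expect !int_split // TY1 TY0 T1 T0 !addr0.
set m := fine (P E); rewrite !(mulrDl _ _ m^-1).
have m_inv_ge0 : 0 <= m^-1 by rewrite invr_ge0 ltW.
have scale (x u : R) : 0 <= x <= u -> 0 <= x / m <= u / m.
  by move=> /andP[x0 xu]; rewrite mulr_ge0 // ler_wpM2r.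
apply: (@binary_mixture_cov_bound _ (fine (P (E `&` T)) / m) (fine (P (E `&` ~` T)) / m)).
- by rewrite -mulrDl -m_split divff // gt_eqF.
- exact/scale/(Rintegral_unit_bounds P mE1 bY Y01).
- exact/scale/(Rintegral_unit_bounds P mE0 bY Y01).
- exact/scale/(Rintegral_unit_bounds P mE1 bYh Yh01).
- exact/scale/(Rintegral_unit_bounds P mE0 bYh Yh01).
- exact/scale/(Rintegral_unit_bounds P mE1 bYYh YYh01).
- exact/scale/(Rintegral_unit_bounds P mE0 bYYh YYh01).
- by rewrite !mulf_div unc1.
- by rewrite !mulf_div unc0.
Qed.

End ConditionalCovariance.

Theorem theorem2 (d : measure_display) (Omega : measurableType d)
  (R : realType) (P : probability Omega R)
  (dT : measure_display) (T : measurableType dT)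
  (X : Omega -> T) (Y Yh : Omega -> R)
  (hX : measurable_fun setT X) (hY : measurable_fun setT Y)
  (hYh : measurable_fun setT Yh)
  (hY01 : forall w, 0 <= Y w <= 1) (hYh01 : forall w, 0 <= Yh w <= 1)
  (F : set (T -> bool))
  (hF : forall f, F f -> measurable [set x | f x])
  (alpha : R) (halpha : 0 <= alpha)
  (K : nat) (S : 'I_K -> set T)
  (hSm : forall k, measurable (S k))
  (hSpos : forall k, (0 < P (X @^-1` S k))%E)
  (hpart : multicalibrated_partition P X Y F alpha S)
  (hci : forall k, exists2 f, F f & cond_indep_given P X Y Yh f (S k)) :
  forall k : 'I_K, `| cond_cov P (X @^-1` S k) Y Yh | <= Num.sqrt (alpha / 2).
Proof.
move=> k; have [_ [_ calibrated]] := hpart; have [f Ff indep_f] := hci k.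
have mE := measurableT_preimage hX (hSm k).
set fX := X @^-1` [set x | f x]; have mfX : measurable fX := measurableT_preimage hX (hF f Ff).
have fX_indic : (fun w => (f (X w))%:R) = \1_fX :> (Omega -> R).
  apply/funext => w; rewrite indicE; suff -> : (w \in fX) = f (X w) by [].
  by apply/idP/idP => [/set_mem|/mem_set].
have fX_false : ~` fX = [set w | f (X w) = false].
  by apply/seteqP; split => w; rewrite /fX /=; [move/negP/negbTE | move=> ->].
have unc1 := uncorrelated_on_of_indep (measurableI _ _ mE mfX) hY hYh hY01 hYh01 (indep_f true).
have unc0 : uncorrelated_on P (X @^-1` S k `&` ~` fX) Y Yh.
  rewrite fX_false; apply: uncorrelated_on_of_indep hY hYh hY01 hYh01 (indep_f false).
  by rewrite -fX_false; exact: measurableI _ _ mE (measurableC mfX).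
have /andP[cov_le cov_le_quarter] :=
  cond_cov_le_cond_cov_indic mE mfX (hSpos k) hY hYh hY01 hYh01 unc1 unc0.
apply: le_sqrt_half_of_le_quarter => //; last exact: le_trans cov_le cov_le_quarter.
by apply: le_trans cov_le _; rewrite -fX_indic; exact: calibrated.
Qed.
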